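(* Let $\pi:(X,T)\to(Y,S)$ be a factor map and let $y_0\in\mathrm{Eq}(Y,S)$ be a minimal point of $(Y,S)$ such that $\pi^{-1}(y_0)=\{x_0\}$. Then $x_0\in\mathrm{Eq}_{\mathrm{syn}}(X,T)$. In particular, $(X,T)$ is not thickly sensitive.
   Context: Systems: compact metric space with continuous surjection; factor map: continuous surjection intertwining the maps. $\mathrm{Eq}(Y,S)$ is the set of equicontinuity points: $y$ such that for every $\varepsilon>0$ there is $\delta>0$ with $\varrho_Y(y,y')<\delta\Rightarrow\varrho_Y(S^ny,S^ny')<\varepsilon$ for all $n\in\mathbb N$. A point is minimal if it lies in a minimal subset (a nonempty closed invariant set all of whose orbits are dense in it). $S_T(U,\delta)=\{n\in\mathbb{N}:\exists x_1,x_2\in U,\ \varrho(T^nx_1,T^nx_2)>\delta\}$, $J_T(U,\delta)=\mathbb N\setminus S_T(U,\delta)$. $\mathrm{Eq}_{\mathrm{syn}}(X,T)$: points $x$ such that for every $\varepsilon>0$ there is a neighborhood $U$ of $x$ with $J_T(U,\varepsilon)$ syndetic (bounded gaps). Thickly sensitive: there is $\delta>0$ with $S_T(U,\delta)$ thick (arbitrarily long blocks of consecutive integers) for every opene $U$. *)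

From Stdlib Require Import Reals List.
Open Scope R_scope.
Set Implicit Arguments.

Record MetricSpace := {
  carrier :> Type;
  dist : carrier -> carrier -> R;
  dist_nonneg : forall x y, 0 <= dist x y;
  dist_eq0 : forall x y, dist x y = 0 <-> x = y;
  dist_sym : forall x y, dist x y = dist y x;
  dist_tri : forall x y z, dist x z <= dist x y + dist y z
}.

Arguments dist {m} _ _.

Section Defs.
Variable X : MetricSpace.

Definition is_open (U : X -> Prop) : Prop :=
  forall x, U x -> exists r, 0 < r /\ forall y, dist x y < r -> U y.

Definition is_closed (A : X -> Prop) : Prop :=
  is_open (fun x => ~ A x).

Definition compact_space : Prop :=
  forall (I : Type) (U : I -> X -> Prop),
    (forall i, is_open (U i)) ->
    (forall x, exists i, U i x) ->
    exists l : list I, forall x, exists i, In i l /\ U i x.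

Definition neighborhood (U : X -> Prop) (x : X) : Prop :=
  exists V, is_open V /\ V x /\ forall y, V y -> U y.

Definition opene (U : X -> Prop) : Prop := is_open U /\ exists x, U x.

Definition iter (T : X -> X) (n : nat) (x : X) : X := Nat.iter n T x.

End Defs.
Arguments iter {X} T n x.
Arguments is_closed {X} A.
Arguments is_open {X} U.
Arguments neighborhood {X} U x.
Arguments opene {X} U.

Definition continuous {X Y : MetricSpace} (f : X -> Y) : Prop :=
  forall x eps, 0 < eps -> exists delta, 0 < delta /\
    forall x', dist x x' < delta -> dist (f x) (f x') < eps.

Definition surjective {A B : Type} (f : A -> B) : Prop :=
  forall b, exists a, f a = b.

Definition TDS {X : MetricSpace} (T : X -> X) : Prop :=
  compact_space X /\ continuous T /\ surjective T.

Definition factor_map {X Y : MetricSpace} (T : X -> X) (S : Y -> Y) (pi : X -> Y) : Prop :=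
  continuous pi /\ surjective pi /\ forall x, pi (T x) = S (pi x).

Definition Eq_pt {Y : MetricSpace} (S : Y -> Y) (y : Y) : Prop :=
  forall eps, 0 < eps -> exists delta, 0 < delta /\
    forall y', dist y y' < delta -> forall n : nat, dist (iter S n y) (iter S n y') < eps.

Definition invariant {X : MetricSpace} (T : X -> X) (M : X -> Prop) : Prop :=
  forall x, M x -> M (T x).

Definition orbit_dense_in {X : MetricSpace} (T : X -> X) (x : X) (M : X -> Prop) : Prop :=
  forall z, M z -> forall eps, 0 < eps -> exists n : nat, dist (iter T n x) z < eps.

Definition minimal_subset {X : MetricSpace} (T : X -> X) (M : X -> Prop) : Prop :=
  (exists x, M x) /\ is_closed M /\ invariant T M /\
  forall x, M x -> orbit_dense_in T x M.

Definition minimal_point {X : MetricSpace} (T : X -> X) (x : X) : Prop :=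
  exists M, minimal_subset T M /\ M x.

Definition S_T {X : MetricSpace} (T : X -> X) (U : X -> Prop) (delta : R) (n : nat) : Prop :=
  exists x1 x2, U x1 /\ U x2 /\ dist (iter T n x1) (iter T n x2) > delta.

Definition J_T {X : MetricSpace} (T : X -> X) (U : X -> Prop) (delta : R) (n : nat) : Prop :=
  ~ S_T T U delta n.

Definition syndetic (A : nat -> Prop) : Prop :=
  exists L : nat, forall m : nat, exists n, (m <= n <= m + L)%nat /\ A n.

Definition thick (A : nat -> Prop) : Prop :=
  forall L : nat, exists m : nat, forall k, (k <= L)%nat -> A (m + k)%nat.

Definition Eq_syn {X : MetricSpace} (T : X -> X) (x : X) : Prop :=
  forall eps, 0 < eps -> exists U, neighborhood U x /\ syndetic (J_T T U eps).

Definition thickly_sensitive {X : MetricSpace} (T : X -> X) : Prop :=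
  exists delta, 0 < delta /\ forall U, opene U -> thick (S_T T U delta).

(* Equicontinuity at y0 keeps the orbit of every point near y0 uniformly close to the
   orbit of y0, and minimality of y0 makes that orbit return near y0 at a syndetic set
   of times.  At those times the whole preimage under pi of a small ball around y0 is
   mapped close to y0, and since the fibre over y0 is the single point x0, compactness
   turns "pi x is close to y0" into "x is close to x0".  So this preimage is a
   neighbourhood of x0 whose T^n-image is small for syndetically many n.  A syndetic
   set meets every thick set, so such a point excludes thick sensitivity. *)
From Pilot Require Import Defs.
From Stdlib Require Import Reals.
From Stdlib Require Import Lra Lia Classical List.

Local Notation d := Defs.dist.

Lemma dist_refl (X : MetricSpace) (x : X) : d x x = 0.
Proof. now apply Defs.dist_eq0. Qed.

Lemma ball_open (X : MetricSpace) (a : X) r : is_open (fun y => d a y < r).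
Proof.
  intros x Hx. exists (r - d a x). split; [lra|].
  intros y Hy. pose proof (Defs.dist_tri _ a x y). lra.
Qed.

Lemma dist_gt_open (X : MetricSpace) (a : X) c : is_open (fun y => c < d y a).
Proof.
  intros x Hx. exists (d x a - c). split; [lra|].
  intros y Hy. pose proof (Defs.dist_tri _ x y a). lra.
Qed.

Lemma or_open (X : MetricSpace) (A B : X -> Prop) :
  is_open A -> is_open B -> is_open (fun x => A x \/ B x).
Proof.
  intros HA HB x [H|H].
  - destruct (HA x H) as [r [Hr Hy]]. exists r; split; auto.
  - destruct (HB x H) as [r [Hr Hy]]. exists r; split; auto.
Qed.

Lemma preimage_open (X Y : MetricSpace) (f : X -> Y) (V : Y -> Prop) :
  continuous f -> is_open V -> is_open (fun x => V (f x)).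
Proof.
  intros Hf HV x Hx. destruct (HV _ Hx) as [r [Hr Hy]].
  destruct (Hf x r Hr) as [dl [Hdl H]]. exists dl; split; auto.
Qed.

Lemma iter_continuous (X : MetricSpace) (T : X -> X) n :
  continuous T -> continuous (iter T n).
Proof.
  intro HT; induction n as [|n IH]; intros x e He.
  - exists e; split; auto.
  - destruct (HT (iter T n x) e He) as [d1 [Hd1 H1]].
    destruct (IH x d1 Hd1) as [d2 [Hd2 H2]].
    exists d2; split; auto. intros x' Hx'. apply H1, H2, Hx'.
Qed.

Lemma iter_add (X : MetricSpace) (T : X -> X) i m x :
  iter T i (iter T m x) = iter T (i + m) x.
Proof. induction i as [|i IH]; auto. unfold iter in *; simpl. now rewrite IH. Qed.

Lemma iter_semiconj (X Y : MetricSpace) (T : X -> X) (S : Y -> Y) (pi : X -> Y) :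
  (forall x, pi (T x) = S (pi x)) -> forall n x, pi (iter T n x) = iter S n (pi x).
Proof.
  intros H n x; induction n as [|n IH]; auto. unfold iter in *; simpl.
  now rewrite H, IH.
Qed.

Lemma invariant_iter (X : MetricSpace) (T : X -> X) M :
  invariant T M -> forall n x, M x -> M (iter T n x).
Proof. intros H n x Hx; induction n; simpl; auto. Qed.

Lemma In_le_list_max l i : In i l -> (i <= fold_right Nat.max 0%nat l)%nat.
Proof.
  induction l as [|a l IH]; simpl; [tauto|].
  intros [->|H]; [lia|]. specialize (IH H); lia.
Qed.

Lemma compact_nat_cover_bounded (X : MetricSpace) (U : nat -> X -> Prop) :
  compact_space X -> (forall n, is_open (U n)) -> (forall x, exists n, U n x) ->
  exists N, forall x, exists n, (n <= N)%nat /\ U n x.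
Proof.
  intros HX HU Hcov. destruct (HX nat U HU Hcov) as [l Hl].
  exists (fold_right Nat.max 0%nat l). intro x.
  destruct (Hl x) as [n [Hn Hx]]. exists n. split; auto. now apply In_le_list_max.
Qed.

Lemma singleton_fiber_uniform (X Y : MetricSpace) (pi : X -> Y) y0 x0 :
  compact_space X -> continuous pi -> (forall x, pi x = y0 <-> x = x0) ->
  forall e, 0 < e -> exists eta, 0 < eta /\ forall x, d (pi x) y0 < eta -> d x0 x < e.
Proof.
  intros HX Hpi Hfib e He.
  destruct (compact_nat_cover_bounded X
              (fun n x => d x0 x < e \/ / (INR n + 1) < d (pi x) y0) HX)
    as [N HN].
  - intro n. apply or_open; [apply ball_open|].
    apply (preimage_open _ _ pi (fun y => / (INR n + 1) < d y y0)); auto.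
    apply dist_gt_open.
  - intro x. destruct (Rlt_or_le (d x0 x) e) as [H|H]; [exists 0%nat; auto|].
    assert (Hpos : 0 < d (pi x) y0).
    { destruct (Defs.dist_nonneg _ (pi x) y0) as [h|h]; auto.
      symmetry in h. apply Defs.dist_eq0, Hfib in h. subst.
      rewrite dist_refl in H. lra. }
    destruct (archimed_cor1 _ Hpos) as [n [Hn Hn0]].
    exists n; right.
    assert (0 < INR n) by (apply lt_0_INR; auto).
    assert (/ (INR n + 1) <= / INR n) by (apply Rinv_le_contravar; lra). lra.
  - exists (/ (INR N + 1)). split.
    { pose proof (pos_INR N). apply Rinv_0_lt_compat; lra. }
    intros x Hx. destruct (HN x) as [n [Hn [H|H]]]; auto.
    apply le_INR in Hn. pose proof (pos_INR n).
    assert (/ (INR N + 1) <= / (INR n + 1)) by (apply Rinv_le_contravar; lra). lra.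
Qed.

Lemma minimal_point_return_syndetic (Y : MetricSpace) (S : Y -> Y) y0 :
  compact_space Y -> continuous S -> minimal_point S y0 ->
  forall r, 0 < r -> syndetic (fun n => d y0 (iter S n y0) < r).
Proof.
  intros HY HS [M [[_ [Hcl [Hinv Hdense]]] HM]] r Hr.
  destruct (compact_nat_cover_bounded Y (fun n z => ~ M z \/ d y0 (iter S n z) < r) HY)
    as [N HN].
  - intro n. apply or_open; [apply Hcl|].
    apply (preimage_open _ _ (iter S n) (fun y => d y0 y < r)).
    + now apply iter_continuous.
    + apply ball_open.
  - intro z. destruct (classic (M z)) as [Hz|Hz]; [|exists 0%nat; auto].
    destruct (Hdense z Hz y0 HM r Hr) as [n Hn]. exists n; right.
    now rewrite Defs.dist_sym.
  - exists N. intro m.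
    destruct (HN (iter S m y0)) as [i [Hi [H|H]]].
    + exfalso; apply H, invariant_iter; auto.
    + exists (m + i)%nat. split; [lia|].
      rewrite iter_add in H. now rewrite Nat.add_comm.
Qed.

Lemma Eq_syn_singleton_fiber (X Y : MetricSpace) (T : X -> X) (S : Y -> Y)
  (pi : X -> Y) y0 x0 :
  TDS T -> TDS S -> factor_map T S pi -> Eq_pt S y0 -> minimal_point S y0 ->
  (forall x, pi x = y0 <-> x = x0) -> Eq_syn T x0.
Proof.
  intros [HX _] [HY [HS _]] [Hpi [_ Hcomm]] Heq Hmin Hfib eps Heps.
  destruct (singleton_fiber_uniform X Y pi y0 x0 HX Hpi Hfib (eps / 2))
    as [eta [Heta Hfiber]]; [lra|].
  destruct (Heq (eta / 2)) as [dl [Hdl Hstable]]; [lra|].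
  set (U := fun x => d y0 (pi x) < dl).
  exists U. split.
  - exists U. repeat split; auto.
    + apply (preimage_open _ _ pi (fun y => d y0 y < dl)); auto. apply ball_open.
    + unfold U. replace (pi x0) with y0 by (symmetry; now apply Hfib).
      now rewrite dist_refl.
  - destruct (minimal_point_return_syndetic Y S y0 HY HS Hmin (eta / 2))
      as [L HL]; [lra|].
    exists L. intro m. destruct (HL m) as [n [Hn Hret]]. exists n. split; auto.
    assert (Hnear : forall x, U x -> d x0 (iter T n x) < eps / 2).
    { intros x Hx. apply Hfiber. rewrite (iter_semiconj _ _ T S pi Hcomm).
      pose proof (Hstable _ Hx n).
      pose proof (Defs.dist_tri _ (iter S n (pi x)) (iter S n y0) y0).
      rewrite (Defs.dist_sym _ (iter S n (pi x))), (Defs.dist_sym _ (iter S n y0)) in *.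
      lra. }
    intros [x1 [x2 [H1 [H2 Hgt]]]].
    pose proof (Hnear _ H1). pose proof (Hnear _ H2).
    pose proof (Defs.dist_tri _ (iter T n x1) x0 (iter T n x2)).
    rewrite (Defs.dist_sym _ (iter T n x1) x0) in *. lra.
Qed.

Lemma Eq_syn_not_thickly_sensitive (X : MetricSpace) (T : X -> X) x0 :
  Eq_syn T x0 -> ~ thickly_sensitive T.
Proof.
  intros Hsyn [delta [Hd Hts]].
  destruct (Hsyn delta Hd) as [U [[V [HV [HVx HVU]]] [L HL]]].
  destruct (Hts V (conj HV (ex_intro _ x0 HVx)) L) as [m Hm].
  destruct (HL m) as [n [Hn HJ]]. apply HJ.
  destruct (Hm (n - m)%nat ltac:(lia)) as [a [b [Ha [Hb Hab]]]].
  replace n with (m + (n - m))%nat by lia.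
  exists a, b; auto.
Qed.

Theorem lemma4p1 (X Y : MetricSpace) (T : X -> X) (S : Y -> Y) (pi : X -> Y)
  (HX : TDS T) (HY : TDS S) (Hpi : factor_map T S pi)
  (y0 : Y) (x0 : X)
  (Hy0eq : Eq_pt S y0) (Hy0min : minimal_point S y0)
  (Hfib : forall x, pi x = y0 <-> x = x0) :
  Eq_syn T x0 /\ ~ thickly_sensitive T.
Proof.
  assert (Hsyn : Eq_syn T x0) by (eapply Eq_syn_singleton_fiber; eauto).
  split; [exact Hsyn|].
  exact (Eq_syn_not_thickly_sensitive _ _ _ Hsyn).
Qed.
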